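(* Let $\Gamma$ and the data $s_0,\eta_0,\Xi$ be as in the context. There is a constant $c>0$ depending only on this data such that for every cusp $\gamma\xi\infty\in\mathbb R^{n-1}$ ($\gamma\in\Gamma$, $\xi\in\Xi$, $\gamma\xi\notin P$), $h(\gamma\xi\infty)\ge c$.
   Context: $n\ge2$, $G=\mathrm{SO}(n,1)$, $K\cong\mathrm{SO}(n)$ maximal compact. $A=\{a(t)\}$ a one-parameter $\mathbb R$-split torus with $\mathfrak g=\mathfrak g_{-1}\oplus\mathfrak z(A)\oplus\mathfrak g_{+1}$, $\mathrm{Ad}(a(t))=e^{\pm t}$ on $\mathfrak g_{\pm1}$; $M=Z_G(A)\cap K$, $N=\exp\mathfrak g_{+1}$, $\mathfrak g_{+1}\cong\mathbb R^{n-1}$, $u(\mathbf x)=\exp\mathbf x$; $\sigma\in K$ with $\sigma^2=e$, $\sigma a(t)\sigma^{-1}=a(-t)$; $P=MAN$. Each $g\in G\setminus P$ is $g=u(\mathbf x)\sigma ma(r)u(\mathbf y)$ with $\mathbf x,r$ unique; $\partial\mathbb H^n\cong\mathbb R^{n-1}\cup\{\infty\}$ via $u(\mathbf x)\sigma P\mapsto\mathbf x$, $P\mapsto\infty$. $\Omega(\eta,s)=\eta\{a(t):t\ge s\}K$. $\Gamma$ discrete, finite covolume, $\Gamma\backslash\mathbb H^n$ non-compact, with fixed $s_0>0$, compact $\eta_0\subset N$, finite $\Xi\ni e$ satisfying: (i) $G=\Gamma\Xi\Omega(\eta_0,s_0)$; (ii) $\Gamma\cap\xi N\xi^{-1}$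 cocompact in $\xi N\xi^{-1}$; (iii) for compact $\eta$, $\{\gamma:\gamma\Xi\Omega(\eta,s_0)\cap\Omega(\eta,s_0)\ne\emptyset\}$ finite; (iv) for compact $\eta\supseteq\eta_0$ some $s_1>s_0$ with $\gamma\xi_1\Omega(\eta,s_0)\cap\xi_2\Omega(\eta,s_1)\ne\emptyset\Rightarrow\xi_1=\xi_2,\gamma\in\xi_1NM\xi_1^{-1}$. Height: for $\gamma\xi=u(\mathbf x_1)\sigma ma(r)u(\mathbf y)$, $\gamma\xi\infty=\mathbf x_1$ and $h(\gamma\xi\infty)=e^r$. *)

From HB Require Import structures.
From mathcomp Require Import all_boot all_order all_algebra.
From mathcomp Require Import all_classical all_reals all_analysis.
Import numFieldNormedType.Exports.

Set Implicit Arguments. Unset Strict Implicit. Unset Printing Implicit Defensive.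
Import Order.TTheory GRing.Theory Num.Theory.
Local Open Scope ring_scope.
Local Open Scope classical_set_scope.

(* Model of G = SO_0(n,1) acting on R^{n+1} with coordinates indexed by 'I_(n.+1):
   e_0, ..., e_{n-2} span the boundary chart R^{n-1};
   e_z (index n-1) and e_w (index n, the time coordinate). *)

Section Lorentz.
Variables (R : realType) (n : nat).

Definition zi : 'I_(n.+1) := inord n.-1.
Definition wi : 'I_(n.+1) := ord_max.

Definition Jmx : 'M[R]_(n.+1) :=
  \matrix_(i, j) (if i == j then (if i == wi then -1 else 1) else 0).

Definition inG (g : 'M[R]_(n.+1)) : Prop :=
  g^T *m Jmx *m g = Jmx /\ \det g = 1 /\ 0 < g wi wi.

Definition inK (g : 'M[R]_(n.+1)) : Prop :=
  inG g /\ g *m delta_mx wi (0 : 'I_1) = delta_mx wi (0 : 'I_1).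

Definition coshR (t : R) : R := (expR t + expR (- t)) / 2.
Definition sinhR (t : R) : R := (expR t - expR (- t)) / 2.

(* the R-split torus A = {a(t)}: boost in the (e_z, e_w)-plane;
   Ad(a(t)) = e^{+t} on Lie(N) below *)
Definition amx (t : R) : 'M[R]_(n.+1) :=
  \matrix_(i, j)
    (if (i == zi) && (j == zi) then coshR t
     else if (i == zi) && (j == wi) then sinhR t
     else if (i == wi) && (j == zi) then sinhR t
     else if (i == wi) && (j == wi) then coshR t
     else if i == j then 1 else 0).

(* embedding of x in R^{n-1} as a spacelike vector in span(e_0..e_{n-2}) *)
Definition xemb (x : 'rV[R]_(n.-1)) (i : 'I_(n.+1)) : R :=
  oapp (fun j : 'I_(n.-1) => x 0 j) 0 (insub (val i)).

(* X_x v = B(v, f+) x~ - B(v, x~) f+,  with f+ = e_z + e_w;  X_x is in so(n,1),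
   X_x^3 = 0 and a(t) X_x a(t)^{-1} = e^t X_x *)
Definition Xmx (x : 'rV[R]_(n.-1)) : 'M[R]_(n.+1) :=
  \matrix_(i, j)
    ((if j == zi then 1 else if j == wi then -1 else 0) * xemb x i
     - xemb x j * (if (i == zi) || (i == wi) then 1 else 0)).

(* u(x) = exp(X_x) *)
Definition umx (x : 'rV[R]_(n.-1)) : 'M[R]_(n.+1) :=
  1%:M + Xmx x + (2%:R)^-1 *: (Xmx x *m Xmx x).

Definition inN (g : 'M[R]_(n.+1)) : Prop := exists x, g = umx x.

(* sigma in K, sigma^2 = e, sigma a(t) sigma^{-1} = a(-t):
   reflection of the coordinates e_0 and e_z (n >= 2 ensures 0 <> z) *)
Definition sigmx : 'M[R]_(n.+1) :=
  \matrix_(i, j)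
    (if i == j then (if (val i == 0%N) || (i == zi) then -1 else 1) else 0).

Definition inM (g : 'M[R]_(n.+1)) : Prop :=
  inK g /\ forall t, g *m amx t = amx t *m g.

Definition inP (g : 'M[R]_(n.+1)) : Prop :=
  exists m t x, inM m /\ g = m *m amx t *m umx x.

Definition Omega (eta : set 'rV[R]_(n.-1)) (s : R) : set 'M[R]_(n.+1) :=
  [set g | exists x t k, eta x /\ s <= t /\ inK k /\ g = umx x *m amx t *m k].

Definition ltrans (g : 'M[R]_(n.+1)) (S : set 'M[R]_(n.+1)) : set 'M[R]_(n.+1) :=
  [set g *m h | h in S].

Definition subgroupG (Gam : set 'M[R]_(n.+1)) : Prop :=
  (forall g, Gam g -> inG g) /\ Gam 1%:M /\
  (forall g h, Gam g -> Gam h -> Gam (g *m h)) /\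
  (forall g, Gam g -> Gam (invmx g)).

Definition discrete_subgroup (Gam : set 'M[R]_(n.+1)) : Prop :=
  exists eps : R, 0 < eps /\
    forall g, Gam g -> (forall i j, `|g i j - (1%:M : 'M[R]_(n.+1)) i j| < eps) ->
      g = 1%:M.

Definition cusp_data (Gam : set 'M[R]_(n.+1)) (s0 : R)
    (eta0 : set 'rV[R]_(n.-1)) (Xi : seq 'M[R]_(n.+1)) : Prop :=
  0 < s0 /\ compact eta0 /\ 1%:M \in Xi /\ (forall xi, xi \in Xi -> inG xi) /\
   (forall g, inG g -> exists gam xi om,
        Gam gam /\ xi \in Xi /\ Omega eta0 s0 om /\ g = gam *m xi *m om) /\
   (* (ii) Gamma cap xi N xi^-1 is cocompact in xi N xi^-1 *)
   (forall xi, xi \in Xi -> exists C : set 'rV[R]_(n.-1), compact C /\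
        forall x, exists gam y, Gam gam /\ C y /\
          xi *m umx x *m invmx xi = gam *m (xi *m umx y *m invmx xi)) /\
   (forall eta : set 'rV[R]_(n.-1), compact eta ->
      finite_set [set gam | Gam gam /\ exists xi, xi \in Xi /\
         (ltrans (gam *m xi) (Omega eta s0) `&` Omega eta s0) !=set0]) /\
   (forall eta : set 'rV[R]_(n.-1), compact eta -> eta0 `<=` eta ->
      exists s1, s0 < s1 /\
        forall gam xi1 xi2, Gam gam -> xi1 \in Xi -> xi2 \in Xi ->
          (ltrans (gam *m xi1) (Omega eta s0) `&` ltrans xi2 (Omega eta s1)) !=set0 ->
          xi1 = xi2 /\ exists x m, inM m /\ gam = xi1 *m umx x *m m *m invmx xi1).

End Lorentz.

From HB Require Import structures.
From mathcomp Require Import all_boot all_order all_algebra.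
From mathcomp Require Import all_classical all_reals all_analysis.
From mathcomp Require Import ring lra.
Import numFieldNormedType.Exports.
Import Order.TTheory GRing.Theory Num.Theory.

Set Implicit Arguments. Unset Strict Implicit. Unset Printing Implicit Defensive.

Local Open Scope ring_scope.
Local Open Scope classical_set_scope.

(* Write the cusp as [gam xi = u(x) sigma m a(r) u(y)].  Cocompactness of the
   cusp stabilisers moves [x] and [-y] into a fixed compact set at the cost of
   replacing [gam] by some [g] in Gamma with
   [g xi u(y') a(s1) = u(x') a(-(r + s1)) sigma m].  If [e^r < e^(-(s0 + s1))]
   the right-hand side lies in [Omega(eta, s0)] and [xi u(y') a(s1)] in
   [xi Omega(eta, s1)], so by (iv) [xi = 1] and [g] lies in [N M].  Now the
   coefficient [B(f+, h f+)], where [f+] is the null vector fixed by [N],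
   vanishes on [N M N A] but equals [-2 e^(r + s1)] on the big cell
   [N A sigma M]: a contradiction. *)

Lemma col_matrixP (T : Type) m n (A B : 'M[T]_(m, n)) :
  (forall j, col j A = col j B) -> A = B.
Proof.
by move=> eq_col; apply/matrixP => i j; move/matrixP: (eq_col j) => /(_ i 0); rewrite !mxE.
Qed.

Lemma conj_mx_eq (R : comUnitRingType) k (A B g xi : 'M[R]_k) : xi \in unitmx ->
  xi *m A *m invmx xi = g *m (xi *m B *m invmx xi) -> xi *m A = g *m xi *m B.
Proof.
move=> xiU /(congr1 (mulmx^~ xi)); rewrite -!mulmxA !mulVmx // !mulmx1.
by rewrite !mulmxA.
Qed.

Lemma compact_cover_seq (T : topologicalType) (I : eqType) (s : seq I)
    (P : I -> set T -> Prop) :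
  (forall i, i \in s -> exists C, compact C /\ P i C) ->
  exists C, compact C /\ forall i, i \in s -> exists2 D, D `<=` C & P i D.
Proof.
elim: s => [|a s IH] hs; first by exists set0; split => [|i]; [exact: compact0 | rewrite in_nil].
have [Ca [cCa PCa]] := hs a (mem_head a s).
have [|C [cC PC]] := IH; first by move=> i si; apply: hs; rewrite in_cons si orbT.
exists (Ca `|` C); split; first exact: compactU.
move=> i; rewrite in_cons => /orP [/eqP -> | si]; first by exists Ca => // ? ?; left.
by have [D DC PD] := PC i si; exists D => // z /DC; right.
Qed.

Section Hyperbolic.
Variable R : realType.
Implicit Types (r s t : R).

Notation ch := (@coshR R).
Notation sh := (@sinhR R).

Lemma coshR_sub_sinhR t : ch t - sh t = expR (- t).
Proof. by rewrite /coshR /sinhR; field. Qed.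

Lemma coshRN t : ch (- t) = ch t.
Proof. by rewrite /coshR /sinhR opprK addrC. Qed.

Lemma sinhRN t : sh (- t) = - sh t.
Proof. by rewrite /coshR /sinhR opprK -mulNr opprB. Qed.

Lemma coshRD r s : ch (r + s) = ch r * ch s + sh r * sh s.
Proof. by rewrite /coshR /sinhR opprD !expRD; field. Qed.

Lemma sinhRD r s : sh (r + s) = sh r * ch s + ch r * sh s.
Proof. by rewrite /coshR /sinhR opprD !expRD; field. Qed.

Lemma sinhR1_neq0 : sh 1 != 0.
Proof.
rewrite /sinhR mulf_eq0 invr_eq0 pnatr_eq0 orbF subr_eq0 gt_eqF //.
by rewrite ltr_expR; lra.
Qed.

End Hyperbolic.

Section LorentzModel.
Variables (R : realType) (n : nat).
Hypothesis n_ge2 : (2 <= n)%N.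
Implicit Types (a b c x y : 'rV[R]_(n.-1)).
Implicit Types (r s t : R).
Implicit Types (g m : 'M[R]_(n.+1)).

Lemma val_zi : val (zi n) = n.-1.
Proof. by apply: inordK; rewrite ltnS leq_pred. Qed.

Lemma zi_neq_wi : zi n != wi n.
Proof. by rewrite -val_eqE val_zi /=; case: n n_ge2 => [|k] //=; rewrite neq_ltn ltnSn. Qed.

Lemma zi_eq_wiF : (zi n == wi n) = false.
Proof. exact: negbTE zi_neq_wi. Qed.

Lemma wi_eq_ziF : (wi n == zi n) = false.
Proof. by rewrite eq_sym zi_eq_wiF. Qed.

Lemma zi_neq0 : zi n != 0.
Proof. by rewrite -val_eqE val_zi; case: n n_ge2 => [|[|k]]. Qed.

Lemma xemb_zi x : xemb x (zi n) = 0.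
Proof. by rewrite /xemb insubF // val_zi ltnn. Qed.

Lemma xemb_wi x : xemb x (wi n) = 0.
Proof. by rewrite /xemb insubF //=; case: n n_ge2 => //= k _; rewrite ltnNge leqnSn. Qed.

Lemma xembD x y i : xemb (x + y) i = xemb x i + xemb y i.
Proof. by rewrite /xemb; case: insubP => [j _ _|_] /=; rewrite ?mxE ?addr0. Qed.

Definition ez : 'cV[R]_(n.+1) := delta_mx (zi n) 0.
Definition ew : 'cV[R]_(n.+1) := delta_mx (wi n) 0.
Definition fplus : 'cV[R]_(n.+1) := ez + ew.
Definition fplusJ : 'rV[R]_(n.+1) := delta_mx 0 (zi n) - delta_mx 0 (wi n).
Definition xcol (x : 'rV[R]_(n.-1)) : 'cV[R]_(n.+1) := \col_i xemb x i.
Definition xrow (x : 'rV[R]_(n.-1)) : 'rV[R]_(n.+1) := \row_i xemb x i.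

Lemma JmxE : Jmx R n = diag_mx (\row_i if i == wi n then -1 else 1).
Proof. by apply/matrixP => i j; rewrite !mxE; case: eqP. Qed.

Lemma fplusJ_Jmx : fplusJ = fplus^T *m Jmx R n.
Proof.
rewrite JmxE mul_mx_diag; apply/rowP => j; rewrite !mxE.
have [->|_] := eqVneq j (zi n); last have [_|_] := eqVneq j (wi n).
all: by rewrite ?zi_eq_wiF ?wi_eq_ziF /=; ring.
Qed.

Lemma XmxE x : Xmx x = xcol x *m fplusJ - fplus *m xrow x.
Proof.
apply/matrixP => i j; rewrite !mxE !big_ord1 !mxE /=.
have [->|hjz] := eqVneq j (zi n); have [->|hiz] := eqVneq i (zi n);
 rewrite ?eqxx ?zi_eq_wiF ?wi_eq_ziF ?xemb_zi ?xemb_wi ?(negbTE hjz) ?(negbTE hiz) /=;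
 try ring;
have [->|hjw] := eqVneq j (wi n); have [->|hiw] := eqVneq i (wi n);
 rewrite ?eqxx ?zi_eq_wiF ?wi_eq_ziF ?xemb_zi ?xemb_wi ?(negbTE hjw) ?(negbTE hiw) /=;
 ring.
Qed.

Lemma fplusJ_xcol x : fplusJ *m xcol x = 0.
Proof.
by rewrite mulmxBl -!rowE; apply/matrixP => i j; rewrite !mxE xemb_zi xemb_wi subrr.
Qed.

Lemma fplusJ_ez : fplusJ *m ez = 1.
Proof.
rewrite mulmxBl mul_delta_mx mul_delta_mx_0 ?subr0 1?eq_sym ?zi_neq_wi //.
by apply/matrixP => i j; rewrite !ord1 !mxE.
Qed.

Lemma fplusJ_ew : fplusJ *m ew = -1.
Proof.
rewrite mulmxBl mul_delta_mx mul_delta_mx_0 ?sub0r ?zi_neq_wi //.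
by apply/matrixP => i j; rewrite !ord1 !mxE.
Qed.

Lemma fplusJ_fplus : fplusJ *m fplus = 0.
Proof. by rewrite mulmxDr fplusJ_ez fplusJ_ew subrr. Qed.

Lemma xrow_fplus x : xrow x *m fplus = 0.
Proof.
by rewrite mulmxDr -!colE; apply/matrixP => i j; rewrite !mxE xemb_zi xemb_wi addr0.
Qed.

Lemma xrow_xcolC a b : xrow a *m xcol b = xrow b *m xcol a.
Proof. by apply/matrixP => i j; rewrite !mxE; apply: eq_bigr => k _; rewrite !mxE mulrC. Qed.

Lemma fplusJ_Xmx x : fplusJ *m Xmx x = 0.
Proof. by rewrite XmxE mulmxBr !mulmxA fplusJ_xcol fplusJ_fplus !mul0mx subrr. Qed.

Lemma mulXmx a b : Xmx a *m Xmx b = - (fplus *m (xrow a *m xcol b) *m fplusJ).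
Proof.
rewrite {1}XmxE mulmxBl -!mulmxA fplusJ_Xmx mulmx0 sub0r XmxE mulmxBr.
by rewrite !mulmxA xrow_fplus (mul0mx _ (xrow b)) subr0 !mulmxA.
Qed.

Lemma XmxC a b : Xmx a *m Xmx b = Xmx b *m Xmx a.
Proof. by rewrite !mulXmx xrow_xcolC. Qed.

Lemma mulXmx3 a b c : Xmx a *m Xmx b *m Xmx c = 0.
Proof. by rewrite mulXmx mulNmx -!mulmxA fplusJ_Xmx !mulmx0 oppr0. Qed.

Lemma XmxD a b : Xmx (a + b) = Xmx a + Xmx b.
Proof.
have xcolD : xcol (a + b) = xcol a + xcol b.
  by apply/matrixP => i j; rewrite !mxE xembD.
have xrowD : xrow (a + b) = xrow a + xrow b.
  by apply/matrixP => i j; rewrite !mxE xembD.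
by rewrite !XmxE xcolD xrowD (mulmxDl (xcol a)) (mulmxDr fplus) opprD addrACA.
Qed.

Lemma Xmx0 : Xmx (0 : 'rV[R]_(n.-1)) = 0.
Proof. by apply: (@addrI _ (Xmx (0 : 'rV[R]_(n.-1)))); rewrite -XmxD !addr0. Qed.

Lemma fplusJ_umx x : fplusJ *m umx x = fplusJ.
Proof.
by rewrite /umx !mulmxDr mulmx1 fplusJ_Xmx -scalemxAr mulmxA fplusJ_Xmx mul0mx scaler0 !addr0.
Qed.

Lemma umx0 : umx (0 : 'rV[R]_(n.-1)) = 1%:M.
Proof. by rewrite /umx Xmx0 mulmx0 scaler0 !addr0. Qed.

Lemma umxD a b : umx a *m umx b = umx (a + b).
Proof.
rewrite /umx XmxD; set A := Xmx a; set B := Xmx b.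
rewrite !mulmxDl !mulmxDr !mul1mx !mulmx1 -!scalemxAl -!scalemxAr !mulmxA /A /B.
rewrite !mulXmx3 mul0mx !scaler0 !addr0 [Xmx b *m Xmx a]XmxC !scalerDr.
have halfD (M : 'M[R]_(n.+1)) : 2^-1 *: M + 2^-1 *: M = M.
  by rewrite -scalerDl (_ : 2^-1 + 2^-1 = 1 :> R) ?scale1r //; field.
by rewrite [RHS](AC ((1*2)*(2*2)) (1*3*7*(2*(5*6))*4)) /= halfD.
Qed.

Notation ch := (@coshR R).
Notation sh := (@sinhR R).

Lemma amx_delta t j : amx n t *m delta_mx j (0 : 'I_1) =
  if j == zi n then ch t *: ez + sh t *: ew
  else if j == wi n then sh t *: ez + ch t *: ew else delta_mx j 0.
Proof.
apply/matrixP => i k; rewrite -colE !ord1.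
have [->|hjz] := eqVneq j (zi n); last have [->|hjw] := eqVneq j (wi n).
all: have [->|hiz] := eqVneq i (zi n); last have [->|hiw] := eqVneq i (wi n).
all: rewrite !mxE ?eqxx ?zi_eq_wiF ?wi_eq_ziF ?(negbTE hjz) ?(negbTE hjw) ?(negbTE hiz) ?(negbTE hiw) //=.
all: by rewrite ?mulr1 ?mulr0 ?addr0 ?add0r ?andbT; do ?case: ifP.
Qed.

Lemma amx_ez t : amx n t *m ez = ch t *: ez + sh t *: ew.
Proof. by rewrite amx_delta eqxx. Qed.

Lemma amx_ew t : amx n t *m ew = sh t *: ez + ch t *: ew.
Proof. by rewrite amx_delta eq_sym (negbTE zi_neq_wi) eqxx. Qed.

Lemma amx_delta_fix t j : j != zi n -> j != wi n ->
  amx n t *m delta_mx j (0 : 'I_1) = delta_mx j 0.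
Proof. by move=> hjz hjw; rewrite amx_delta (negbTE hjz) (negbTE hjw). Qed.

Lemma amxD r s : amx n r *m amx n s = amx n (r + s).
Proof.
apply/col_matrixP => j; rewrite !colE -mulmxA.
have [->|hjz] := eqVneq j (zi n); last have [->|hjw] := eqVneq j (wi n).
- rewrite -/ez !amx_ez mulmxDr -!scalemxAr amx_ez amx_ew !scalerDr !scalerA.
  by rewrite addrACA -!scalerDl coshRD sinhRD; congr (_ *: _ + _ *: _); ring.
- rewrite -/ew !amx_ew mulmxDr -!scalemxAr amx_ez amx_ew !scalerDr !scalerA.
  by rewrite addrACA -!scalerDl coshRD sinhRD; congr (_ *: _ + _ *: _); ring.
- by rewrite !amx_delta_fix.
Qed.

Lemma fplusJ_amx t : fplusJ *m amx n t = expR (- t) *: fplusJ.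
Proof.
apply/rowP => j; rewrite mulmxBl -!rowE !mxE !eqxx /= -coshR_sub_sinhR.
have [->|_] := eqVneq j (zi n); last have [_|_] := eqVneq j (wi n).
all: by rewrite ?zi_eq_wiF ?wi_eq_ziF /=; ring.
Qed.

Definition sigma_sign : 'rV[R]_(n.+1) :=
  \row_i (if (val i == 0%N) || (i == zi n) then -1 else 1).

Lemma sigmxE : sigmx R n = diag_mx sigma_sign.
Proof. by apply/matrixP => i j; rewrite !mxE; case: eqP. Qed.

Lemma sigmx_delta j :
  sigmx R n *m delta_mx j (0 : 'I_1) = sigma_sign 0 j *: delta_mx j 0.
Proof.
rewrite sigmxE mul_diag_mx; apply/matrixP => i k; rewrite !mxE.
by have [->|_] := eqVneq i j; rewrite ?mulr0.
Qed.

Lemma sigma_sign_zi : sigma_sign 0 (zi n) = -1.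
Proof. by rewrite mxE eqxx orbT. Qed.

Lemma sigma_sign_wi : sigma_sign 0 (wi n) = 1.
Proof.
have wi_neq0 : (val (wi n) == 0%N) = false by case: n n_ge2.
by rewrite mxE wi_neq0 (eq_sym (wi n)) (negbTE zi_neq_wi).
Qed.

Lemma sigmx_ez : sigmx R n *m ez = - ez.
Proof. by rewrite sigmx_delta sigma_sign_zi scaleN1r. Qed.

Lemma sigmx_ew : sigmx R n *m ew = ew.
Proof. by rewrite sigmx_delta sigma_sign_wi scale1r. Qed.

Lemma sigmx_amx t : sigmx R n *m amx n t = amx n (- t) *m sigmx R n.
Proof.
apply/col_matrixP => j; rewrite !colE -!mulmxA sigmx_delta -scalemxAr.
have [->|hjz] := eqVneq j (zi n); last have [->|hjw] := eqVneq j (wi n).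
- rewrite -/ez !amx_ez mulmxDr -!scalemxAr sigmx_ez sigmx_ew sigma_sign_zi.
  by rewrite coshRN sinhRN scaleN1r opprD scaleNr opprK scalerN.
- rewrite -/ew !amx_ew mulmxDr -!scalemxAr sigmx_ez sigmx_ew sigma_sign_wi.
  by rewrite coshRN sinhRN scale1r scaleNr scalerN.
- by rewrite !amx_delta_fix // sigmx_delta.
Qed.

Lemma fplusJ_sigmx_fplus : fplusJ *m sigmx R n *m fplus = - (1 + 1).
Proof.
by rewrite -mulmxA mulmxDr sigmx_ez sigmx_ew mulmxDr mulmxN fplusJ_ez fplusJ_ew opprD.
Qed.

Lemma det_sigmx : \det (sigmx R n) = 1.
Proof.
rewrite sigmxE det_diag (bigD1 0) //= (bigD1 (zi n)) ?zi_neq0 //= big1 ?mulr1.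
  by rewrite !mxE eqxx orbT mulrNN mulr1.
move=> i /andP [hi0 hiz].
by rewrite mxE (negbTE hiz) orbF -[val i == 0%N]/(i == 0) (negbTE hi0).
Qed.

Lemma sigmx_Jmx_sigmx : (sigmx R n)^T *m Jmx R n *m sigmx R n = Jmx R n.
Proof.
rewrite sigmxE JmxE tr_diag_mx !mulmx_diag; congr diag_mx; apply/rowP => i.
by rewrite !mxE; case: ifP => _; case: ifP => _; ring.
Qed.

Lemma inK_sigmx m : inK m -> inK (sigmx R n *m m).
Proof.
move=> [[mJ [detm mww]] mew]; split; last by rewrite -mulmxA mew sigmx_ew.
split.
  rewrite trmx_mul -!mulmxA (mulmxA _ (Jmx R n)) (mulmxA _ (sigmx R n)).
  by rewrite sigmx_Jmx_sigmx mulmxA.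
split; first by rewrite det_mulmx det_sigmx detm mulr1.
by rewrite sigmxE mul_diag_mx mxE sigma_sign_wi mul1r.
Qed.

Lemma inK1 : inK (1%:M : 'M[R]_(n.+1)).
Proof.
split; last by rewrite mul1mx.
split; first by rewrite trmx1 mul1mx mulmx1.
by split; [rewrite det1 | rewrite mxE eqxx ltr01].
Qed.

(* [m] fixes [ew] as an element of [K], and [ez] since it commutes with [amx 1]. *)
Lemma inM_fplus m : inM m -> m *m fplus = fplus.
Proof.
move=> [[_ mew] m_amx]; have := congr1 (mulmx^~ ew) (m_amx 1).
rewrite -!mulmxA mew amx_ew mulmxDr -!scalemxAr mew => /addIr /(scalerI (sinhR1_neq0 R)) mez.
by rewrite mulmxDr mez mew.
Qed.

Lemma fplusJ_inG m : inG m -> m *m fplus = fplus -> fplusJ *m m = fplusJ.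
Proof. by move=> [mJ _] mf; rewrite fplusJ_Jmx -{1}mf trmx_mul -!mulmxA (mulmxA m^T) mJ. Qed.

Lemma mem_Omega eta s x t k : eta x -> s <= t -> inK k ->
  Omega eta s (umx x *m amx n t *m k).
Proof. by move=> eta_x st Kk; exists x, t, k. Qed.

Definition bruhat_coef (g : 'M[R]_(n.+1)) : R := (fplusJ *m g *m fplus) 0 0.

Lemma bruhat_coef_big_cell x t m : inM m ->
  bruhat_coef (umx x *m amx n t *m (sigmx R n *m m)) = - 2 * expR (- t).
Proof.
move=> Mm; rewrite /bruhat_coef !mulmxA fplusJ_umx fplusJ_amx -!scalemxAl -mulmxA inM_fplus //.
by rewrite fplusJ_sigmx_fplus !mxE mulrC.
Qed.

Lemma bruhat_coef_stab g y s : fplusJ *m g = fplusJ ->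
  bruhat_coef (g *m umx y *m amx n s) = 0.
Proof.
move=> gJ; rewrite /bruhat_coef !mulmxA gJ fplusJ_umx fplusJ_amx -scalemxAl fplusJ_fplus.
by rewrite scaler0 mxE.
Qed.

Lemma inG_unitmx g : inG g -> g \in unitmx.
Proof. by move=> [_ [detg _]]; rewrite unitmxE detg unitr1. Qed.

Lemma fplusJ_invmx_NM g x m : g \in unitmx -> inM m -> invmx g = umx x *m m ->
  fplusJ *m g = fplusJ.
Proof.
move=> gU Mm gV; have MG : inG m by case: Mm => [[]].
have fplusJ_gV : fplusJ *m invmx g = fplusJ.
  by rewrite gV mulmxA fplusJ_umx fplusJ_inG // inM_fplus.
by rewrite -{1}fplusJ_gV -mulmxA mulVmx ?mulmx1.
Qed.

Lemma recentre_big_cell gam xi gL gR x y x' y' m r s :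
  xi \in unitmx -> gL \in unitmx -> inM m ->
  gam *m xi = umx x *m sigmx R n *m m *m amx n r *m umx y ->
  xi *m umx (- y) = gR *m xi *m umx y' -> umx x = gL *m umx x' ->
  invmx gL *m gam *m gR *m xi *m (umx y' *m amx n s) =
    umx x' *m amx n (- (r + s)) *m (sigmx R n *m m).
Proof.
move=> xiU gLU [_ m_amx] dec ER EL.
rewrite !mulmxA -(mulmxA _ gR) -(mulmxA _ (gR *m xi)) -ER.
rewrite mulmxA -(mulmxA _ gam) dec -!mulmxA (mulmxA (umx y)) umxD addrN umx0 mul1mx.
rewrite amxD m_amx (mulmxA (sigmx R n)) sigmx_amx EL !mulmxA.
by rewrite mulVmx // mul1mx.
Qed.
End LorentzModel.

Theorem lemma3p1 (R : realType) (n : nat) (Hn : (2 <= n)%N)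
    (Gam : set 'M[R]_(n.+1)) (s0 : R) (eta0 : set 'rV[R]_(n.-1))
    (Xi : seq 'M[R]_(n.+1)) :
  subgroupG Gam -> discrete_subgroup Gam -> cusp_data Gam s0 eta0 Xi ->
  exists c : R, 0 < c /\
    forall gam xi, Gam gam -> xi \in Xi -> ~ inP (gam *m xi) ->
      forall (x : 'rV[R]_(n.-1)) (m : 'M[R]_(n.+1)) (r : R) (y : 'rV[R]_(n.-1)),
        inM m -> gam *m xi = umx x *m @sigmx R n *m m *m @amx R n r *m umx y ->
        c <= expR r.
Proof.
move=> [GamG [_ [GamM GamV]]] _ [_ [ceta0 [Xi1 [XiG [_ [cocpt [_ sep]]]]]]].
have [C [cC C_fund]] := compact_cover_seq cocpt.
have [s1 [s0s1 sep1]] := sep (eta0 `|` C) (compactU ceta0 cC) (@subsetUl _ _ _).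
exists (expR (- (s0 + s1))); split=> [|gam xi Ggam Xixi _ x m r y Mm dec].
  exact: expR_gt0.
rewrite leNgt ltr_expR; apply/negP => deep.
have xiU := inG_unitmx (XiG _ Xixi).
have [D DC fundD] := C_fund xi Xixi; have [gR [y' [GgR [Dy' ER]]]] := fundD (- y).
have [D1 D1C fund1] := C_fund _ Xi1; have [gL [x' [GgL [D1x' EL]]]] := fund1 x.
move/(conj_mx_eq xiU): ER; move/(conj_mx_eq (unitmx1 _ _)): EL.
rewrite !mul1mx mulmx1 => EL ER.
pose g := invmx gL *m gam *m gR.
have Gg : Gam g by apply: (GamM) => //; apply: (GamM) => //; apply: (GamV).
have gU := inG_unitmx (GamG _ Gg).
have key : g *m xi *m (umx y' *m amx n s1) =
    umx x' *m amx n (- (r + s1)) *m (sigmx R n *m m).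
  exact: recentre_big_cell (inG_unitmx (GamG _ GgL)) Mm dec ER EL.
clearbody g.
pose eta := eta0 `|` C.
have Omega_s1 : Omega eta s1 (umx y' *m amx n s1 *m 1%:M).
  by apply: mem_Omega; [right; exact: DC | lra | exact: inK1].
have Omega_s0 : Omega eta s0 (umx x' *m amx n (- (r + s1)) *m (sigmx R n *m m)).
  by apply: mem_Omega; [right; exact: D1C | lra | apply: inK_sigmx; case: Mm].
have meet : ltrans (invmx g *m 1%:M) (Omega eta s0) `&` ltrans xi (Omega eta s1) !=set0.
  exists (xi *m (umx y' *m amx n s1 *m 1%:M)); split; last by exists (umx y' *m amx n s1 *m 1%:M).
  exists (umx x' *m amx n (- (r + s1)) *m (sigmx R n *m m)) => //.
  by rewrite mulmx1 -key mulmx1 -!mulmxA (mulmxA (invmx g)) mulVmx // mul1mx.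
have [xi1 [x0 [m0 [Mm0]]]] := sep1 _ _ _ (GamV _ Gg) Xi1 Xixi meet.
rewrite invmx1 mulmx1 mul1mx => gV; subst xi.
have := bruhat_coef_big_cell Hn x' (- (r + s1)) Mm.
rewrite -key mulmx1 mulmxA (bruhat_coef_stab Hn _ _ (fplusJ_invmx_NM Hn gU Mm0 gV)).
by have := expR_gt0 (- - (r + s1)); lra.
Qed.
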